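(* Let $\mathcal{H}$ be a complex linear space with a non-degenerate indefinite inner product $[\cdot,\cdot]$, and let $\mathcal{H}=\mathcal{L}_+[\dot+]\mathcal{L}_-$ be a fundamental decomposition with associated inner product $\langle\cdot,\cdot\rangle_{\mathcal{L}}$ and norm $\|\cdot\|_{\mathcal{L}}$. Let $\{U(t):t\in\mathbb{R}\}$ be a one-parameter group of bijective linear operators on $\mathcal{H}$ ($U(0)=I$, $U(t+s)=U(t)U(s)$) which are unitary with respect to $[\cdot,\cdot]$, i.e. $[U(t)f,U(t)g]=[f,g]$ for all $f,g\in\mathcal{H}$, $t\in\mathbb{R}$. For $t\in\mathbb{R}$ let $\|\cdot\|_t$ be the norm associated with the fundamental decomposition $\mathcal{H}=\mathcal{L}^t_+[\dot+]\mathcal{L}^t_-$, where $\mathcal{L}^t_\pm=U(t)\mathcal{L}_\pm$. Then for every $t\neq0$ the following are equivalent: (i) $U(t)$ and $U(t)^{-1}$ are bounded operators in the pre-Hilbert space $(\mathcal{H},\langle\cdot,\cdot\rangle_{\mathcal{L}})$; (ii) the norms $\|\cdot\|_{\mathcal{L}}$ and $\|\cdot\|_t$ are equivalent on $\mathcal{H}$.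
   Context: An indefinite inner product is a Hermitian sesquilinear form $[\cdot,\cdot]$ (linear in the second argument) with vectors of both positive and negative square; non-degenerate means $[f,g]=0\ \forall g$ implies $f=0$. A subspace is positive (negative) if each nonzero vector in it has $[f,f]>0$ ($<0$). A fundamental decomposition $\mathcal{H}=\mathcal{L}_+[\dot+]\mathcal{L}_-$ is a direct sum of a positive subspace $\mathcal{L}_+$ and a negative subspace $\mathcal{L}_-$ that are $[\cdot,\cdot]$-orthogonal; its associated inner product is $\langle f,g\rangle_{\mathcal{L}}=[f_+,g_+]-[f_-,g_-]$ for $f=f_++f_-$, $g=g_++g_-$, $f_\pm,g_\pm\in\mathcal{L}_\pm$, with norm $\|f\|_{\mathcal{L}}=\langle f,f\rangle_{\mathcal{L}}^{1/2}$. Since $U(t)$ is bijective and preserves $[\cdot,\cdot]$, $\mathcal{H}=U(t)\mathcal{L}_+[\dot+]U(t)\mathcal{L}_-$ is again a fundamental decomposition; $\|\cdot\|_t$ is its associated norm. *)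

From HB Require Import structures.
From mathcomp Require Import all_boot all_order all_algebra.
From mathcomp Require Import boolp classical_sets reals.
From mathcomp Require Export complex.
Set Implicit Arguments. Unset Strict Implicit. Unset Printing Implicit Defensive.
Import Order.TTheory GRing.Theory Num.Theory.
Local Open Scope ring_scope.
Local Open Scope classical_set_scope.

Section Krein.
Variables (R : realType) (V : lmodType R[i]).
Local Open Scope complex_scope.

Definition kr_hermitian_sesquilinear (B : V -> V -> R[i]) : Prop :=
  (forall (a : R[i]) f g h, B f (a *: g + h) = a * B f g + B f h) /\
  (forall (a : R[i]) f g h, B (a *: f + h) g = (a ^*)%C * B f g + B h g) /\
  (forall f g, B g f = ((B f g) ^*)%C).

Definition kr_nondegenerate (B : V -> V -> R[i]) : Prop :=
  forall f, (forall g, B f g = 0) -> f = 0.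

Definition kr_indefinite (B : V -> V -> R[i]) : Prop :=
  (exists f, 0 < B f f) /\ (exists g, B g g < 0).

Definition kr_subspace (S : set V) : Prop :=
  S 0 /\ forall (a : R[i]) f g, S f -> S g -> S (a *: f + g).

Definition kr_positive_sub (B : V -> V -> R[i]) (S : set V) : Prop :=
  forall f, S f -> f != 0 -> 0 < B f f.

Definition kr_negative_sub (B : V -> V -> R[i]) (S : set V) : Prop :=
  forall f, S f -> f != 0 -> B f f < 0.

Definition kr_fundamental_decomposition (B : V -> V -> R[i]) (Lp Lm : set V) : Prop :=
  [/\ kr_subspace Lp /\ kr_subspace Lm, kr_positive_sub B Lp, kr_negative_sub B Lm,
      (forall f g, Lp f -> Lm g -> B f g = 0) &
      (forall f, Lp f -> Lm f -> f = 0) /\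
      (forall f, exists fp fm, [/\ Lp fp, Lm fm & f = fp + fm])].

Definition kr_comp_plus (Lp Lm : set V) (f : V) : V :=
  xget 0 [set p | Lp p /\ exists m, Lm m /\ f = p + m].
Definition kr_comp_minus (Lp Lm : set V) (f : V) : V := f - kr_comp_plus Lp Lm f.

Definition kr_fd_inner (B : V -> V -> R[i]) (Lp Lm : set V) (f g : V) : R[i] :=
  B (kr_comp_plus Lp Lm f) (kr_comp_plus Lp Lm g) - B (kr_comp_minus Lp Lm f) (kr_comp_minus Lp Lm g).

(* associated norm ||f||_L = <f,f>_L^(1/2)  (<f,f>_L is real and >= 0) *)
Definition kr_fd_norm (B : V -> V -> R[i]) (Lp Lm : set V) (f : V) : R :=
  Num.sqrt (complex.Re (kr_fd_inner B Lp Lm f f)).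

Definition kr_bounded_op (N : V -> R) (T : V -> V) : Prop :=
  exists c : R, forall f, N (T f) <= c * N f.

Definition kr_equivalent_norms (N1 N2 : V -> R) : Prop :=
  exists a b : R, [/\ 0 < a, 0 < b & forall f, a * N1 f <= N2 f /\ N2 f <= b * N1 f].

End Krein.

(* Since U(t) is bijective and [.,.]-unitary, it maps the components of f with
   respect to L+ [+] L- onto the components of U(t) f with respect to
   U(t)L+ [+] U(t)L-, so ||U(t) f||_t = ||f||_L, i.e. ||f||_t = ||U(t)^-1 f||_L.
   The lower bound a ||f||_L <= ||f||_t is therefore boundedness of U(t) and the
   upper bound ||f||_t <= b ||f||_L is boundedness of U(t)^-1.  Only the
   bijectivity and unitarity of the single operator U(t) are used. *)
From HB Require Import structures.
From mathcomp Require Import all_boot all_order all_algebra.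
From mathcomp Require Import boolp classical_sets reals.
From mathcomp Require Import complex.

Set Implicit Arguments.
Unset Strict Implicit.
Unset Printing Implicit Defensive.

Import Order.TTheory GRing.Theory Num.Theory.
Local Open Scope ring_scope.
Local Open Scope classical_set_scope.

Section Components.
Variables (R : realType) (V : lmodType R[i]).

Lemma kr_subspaceB (S : set V) f g : kr_subspace S -> S f -> S g -> S (f - g).
Proof. by move=> [_ SS] Sf Sg; have := SS (-1) g f Sg Sf; rewrite scaleN1r addrC. Qed.

Lemma kr_subspace_image (U : {linear V -> V}) (S : set V) :
  kr_subspace S -> kr_subspace (U @` S).
Proof.
move=> [S0 SS]; split; first by exists 0; rewrite ?linear0.
by move=> a _ _ [f Sf <-] [g Sg <-]; exists (a *: f + g); [exact: SS | rewrite linearP].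
Qed.

Variables (Lp Lm : set V).
Hypotheses (Lp_sub : kr_subspace Lp) (Lm_sub : kr_subspace Lm).
Hypothesis Lpm_meet0 : forall f, Lp f -> Lm f -> f = 0.

Lemma direct_sum_uniq p m p' m' :
  Lp p -> Lm m -> Lp p' -> Lm m' -> p + m = p' + m' -> p = p'.
Proof.
move=> Lpp Lmm Lpp' Lmm' E; apply/eqP; rewrite -subr_eq0; apply/eqP.
have Ediff : p - p' = m' - m by rewrite -(addrK m p) E [p' + m']addrC addrAC addrK.
apply: Lpm_meet0; first exact: kr_subspaceB.
by rewrite Ediff; apply: kr_subspaceB.
Qed.

Lemma kr_comp_plusE p m : Lp p -> Lm m -> kr_comp_plus Lp Lm (p + m) = p.
Proof.
move=> Lpp Lmm; rewrite /kr_comp_plus.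
set P := [set q | Lp q /\ exists m', Lm m' /\ p + m = q + m'].
have [|Lpq [m' [Lmm' E]]] := @xgetPex _ 0 P; first by exists p; split => //; exists m.
by rewrite (direct_sum_uniq Lpp Lmm Lpq Lmm' E).
Qed.

End Components.

Section UnitaryImage.
Variables (R : realType) (V : lmodType R[i]) (B : V -> V -> R[i]) (Lp Lm : set V).
Variable U : {linear V -> V}.
Hypotheses (FD : kr_fundamental_decomposition B Lp Lm) (U_bij : bijective U).
Hypothesis U_unitary : forall f g, B (U f) (U g) = B f g.

Lemma kr_fundamental_decomposition_image :
  kr_fundamental_decomposition B (U @` Lp) (U @` Lm).
Proof.
have U_inj := bij_inj U_bij; have [Uinv UK KU] := U_bij.
have U_neq0 f : U f != 0 -> f != 0 by apply: contraNneq => ->; rewrite linear0.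
have [[Lp_sub Lm_sub] Lp_pos Lm_neg Lpm_orth [Lpm_meet0 Lpm_span]] := FD.
split.
- by split; apply: kr_subspace_image.
- by move=> _ [f Lpf <-] /U_neq0 f_neq0; rewrite U_unitary Lp_pos.
- by move=> _ [f Lmf <-] /U_neq0 f_neq0; rewrite U_unitary Lm_neg.
- by move=> _ _ [f Lpf <-] [g Lmg <-]; rewrite U_unitary Lpm_orth.
split.
- move=> _ [f Lpf <-] [g Lmg /U_inj gf].
  by rewrite (Lpm_meet0 f) ?linear0 // -gf.
- move=> f; have [p [m [Lpp Lmm pm]]] := Lpm_span (Uinv f).
  exists (U p), (U m); split; [by exists p | by exists m|].
  by rewrite -linearD -pm KU.
Qed.

Lemma kr_comp_plus_image g :
  kr_comp_plus (U @` Lp) (U @` Lm) (U g) = U (kr_comp_plus Lp Lm g).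
Proof.
have [[Lp_sub Lm_sub] _ _ _ [Lpm_meet0 Lpm_span]] := FD.
have [[ULp_sub ULm_sub] _ _ _ [ULpm_meet0 _]] := kr_fundamental_decomposition_image.
have [p [m [Lpp Lmm ->]]] := Lpm_span g.
rewrite linearD !kr_comp_plusE //; by [exists p | exists m].
Qed.

Lemma kr_fd_norm_image g :
  kr_fd_norm B (U @` Lp) (U @` Lm) (U g) = kr_fd_norm B Lp Lm g.
Proof.
by rewrite /kr_fd_norm /kr_fd_inner /kr_comp_minus kr_comp_plus_image -linearB !U_unitary.
Qed.

End UnitaryImage.

Section BoundedOperators.
Variables (R : realType) (V : lmodType R[i]) (N : V -> R).
Hypothesis N_ge0 : forall f, 0 <= N f.

Lemma kr_bounded_op_gt0 T :
  kr_bounded_op N T -> exists2 c, 0 < c & forall f, N (T f) <= c * N f.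
Proof.
case=> c Tc; exists (Num.max c 1); first by rewrite lt_max ltr01 orbT.
by move=> f; apply: le_trans (Tc f) _; rewrite ler_wpM2r // le_max lexx.
Qed.

Lemma kr_equivalent_norms_compP (T Tinv : V -> V) (N' : V -> R) :
  cancel T Tinv -> cancel Tinv T -> (forall f, N' f = N (Tinv f)) ->
  kr_equivalent_norms N N' <-> kr_bounded_op N T /\ kr_bounded_op N Tinv.
Proof.
move=> TK KT N'E; split.
- case=> a [b [a_gt0 b_gt0 Nab]]; split.
    exists a^-1 => g; rewrite ler_pdivlMl //.
    by have [+ _] := Nab (T g); rewrite N'E TK.
  by exists b => f; have [_] := Nab f; rewrite N'E.
- case=> /kr_bounded_op_gt0[c c_gt0 Tc] /kr_bounded_op_gt0[d d_gt0 Tinvd].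
  exists c^-1, d; split; rewrite ?invr_gt0 // => f; rewrite N'E; split => //.
  by rewrite ler_pdivrMl // -{1}(KT f).
Qed.

End BoundedOperators.

Theorem lemma3p5 (R : realType) (V : lmodType R[i]) (B : V -> V -> R[i])
  (Lp Lm : set V) (U : R -> {linear V -> V}) :
  kr_hermitian_sesquilinear B -> kr_nondegenerate B -> kr_indefinite B ->
  kr_fundamental_decomposition B Lp Lm ->
  (forall f, U 0 f = f) ->
  (forall t s f, U (t + s) f = U t (U s f)) ->
  (forall t, bijective (U t)) ->
  (forall t f g, B (U t f) (U t g) = B f g) ->
  forall t : R, t != 0 ->
  ((kr_bounded_op (kr_fd_norm B Lp Lm) (U t) /\
    (forall Uinv : V -> V, cancel (U t) Uinv -> cancel Uinv (U t) ->
       kr_bounded_op (kr_fd_norm B Lp Lm) Uinv))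
   <->
   kr_equivalent_norms (kr_fd_norm B Lp Lm) (kr_fd_norm B (U t @` Lp) (U t @` Lm))).
Proof.
move=> _ _ _ FD _ _ U_bij U_unitary t _.
have [Uinv UK KU] := U_bij t.
have NtE f : kr_fd_norm B (U t @` Lp) (U t @` Lm) f = kr_fd_norm B Lp Lm (Uinv f).
  by rewrite -{1}(KU f) kr_fd_norm_image.
have norm_ge0 f : 0 <= kr_fd_norm B Lp Lm f by apply: sqrtr_ge0.
have equivP := kr_equivalent_norms_compP norm_ge0 UK KU NtE.
split=> [[Ut_bdd Uinv_bdd] | /equivP[Ut_bdd [c Uinvc]]].
  by apply/equivP; split; last exact: Uinv_bdd.
split=> // Uinv' UK' _.
by exists c => f; rewrite (bij_can_eq (U_bij t) UK' UK).
Qed.
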